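(* Consider the asynchronous best response dynamics $Z(t)$ described in the context, with an arbitrary distribution of the initial configuration $Z(0)$ on $[0,1]^n$. Then there exists a nonnegative random time $T$ with $\mathbb P(T<+\infty)=1$ such that $Z_i(t)<1$ for every $i\in\mathcal V$ and every $t\ge T$.
   Context: Let $n\ge1$ and $\mathcal V=\{1,\dots,n\}$. Let $P\in\mathbb{R}^{n\times n}$ be a row-stochastic, irreducible, aperiodic matrix (the graph on $\mathcal V$ with edge $(i,j)$ iff $P_{ij}>0$ is strongly connected with gcd of cycle lengths $1$). For $z\in[0,1]^n$, $W(z)=(I-[z])P+[z]$ ($[z]$ the diagonal matrix with diagonal $z$) and $H(z)=\lim_{t\to\infty}W(z)^t$ (the limit exists and is row-stochastic). Let $\sigma_1^2,\dots,\sigma_n^2>0$. Agent $i$'s cost is $\upsilon_i(z)=\sum_jH_{ij}(z)^2\sigma_j^2$, and her best response set to $z_{-i}=(z_j)_{j\ne i}$ is $\mathcal B_i(z_{-i})=\arg\min_{z_i\in[0,1]}\upsilon_i(z_i,z_{-i})$ (always nonempty; a singleton or an interval). The asynchronous best response dynamics is the discrete-time Markov chain $Z(t)$ on $[0,1]^n$ in which, at each time $t=0,1,2,\dots$, an agent $k$ is chosen uniformly at random from $\mathcal V$, $Z_k(t+1)$ is drawn uniformly at random from $\mathcal B_k(Z_{-k}(t))$, and $Z_{-k}(t+1)=Z_{-k}(t)$. *)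

From HB Require Import structures.
From mathcomp Require Import all_boot all_order all_algebra.
From mathcomp Require Import all_classical all_reals all_analysis.
Set Implicit Arguments. Unset Strict Implicit. Unset Printing Implicit Defensive.
Import Order.TTheory GRing.Theory Num.Theory.
Import numFieldNormedType.Exports.
Local Open Scope classical_set_scope.
Local Open Scope ring_scope.

Section Defs.
Variables (R : realType) (n : nat).

Definition row_stochastic (P : 'M[R]_n) : Prop :=
  (forall i j, 0 <= P i j) /\ (forall i, \sum_(j < n) P i j = 1).

Definition graph_rel (P : 'M[R]_n) : rel 'I_n := fun i j => 0 < P i j.

Definition irreducible_mx (P : 'M[R]_n) : Prop :=
  forall i j, connect (graph_rel P) i j.

Definition cycle_length (P : 'M[R]_n) (L : nat) : Prop :=
  (0 < L)%N /\ exists (i : 'I_n) (s : seq 'I_n),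
    size s = L /\ path (graph_rel P) i s /\ last i s = i.

(* aperiodic: the gcd of the cycle lengths is 1, i.e. 1 is the only common
   divisor of all cycle lengths *)
Definition aperiodic_mx (P : 'M[R]_n) : Prop :=
  forall d : nat, (forall L, cycle_length P L -> (d %| L)%N) -> d = 1%N.

Definition mpow (A : 'M[R]_n) (t : nat) : 'M[R]_n := iter t (mulmx A) 1%:M.

Definition Wmx (P : 'M[R]_n) (z : 'I_n -> R) : 'M[R]_n :=
  (1%:M - diag_mx (\row_i z i)) *m P + diag_mx (\row_i z i).

Definition Hmx (P : 'M[R]_n) (z : 'I_n -> R) (i j : 'I_n) : R :=
  limn (fun t : nat => mpow (Wmx P z) t i j).

Definition cost (P : 'M[R]_n) (sigma2 : 'I_n -> R) (i : 'I_n) (z : 'I_n -> R) : R :=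
  \sum_(j < n) (Hmx P z i j) ^+ 2 * sigma2 j.

Definition setc (z : 'I_n -> R) (i : 'I_n) (x : R) : 'I_n -> R :=
  fun j => if j == i then x else z j.

(* best response set B_i(z_{-i}) (depends on z only through z_{-i}) *)
Definition best_resp (P : 'M[R]_n) (sigma2 : 'I_n -> R) (i : 'I_n) (z : 'I_n -> R)
  : set R :=
  [set x | 0 <= x <= 1 /\
     forall y, 0 <= y <= 1 -> cost P sigma2 i (setc z i x) <= cost P sigma2 i (setc z i y)].

(* one asynchronous best-response step: agent k updates to the point of the
   (singleton or closed interval) set B_k at relative position u in [0,1];
   with u uniform on [0,1] this is a uniform draw from B_k *)
Definition br_step (P : 'M[R]_n) (sigma2 : 'I_n -> R) (z : 'I_n -> R) (k : 'I_n) (u : R)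
  : 'I_n -> R :=
  let B := best_resp P sigma2 k z in
  setc z k (inf B + u * (sup B - inf B)).

Fixpoint br_chain (P : 'M[R]_n) (sigma2 : 'I_n -> R) (z0 : 'I_n -> R)
  (k : nat -> 'I_n) (u : nat -> R) (t : nat) : 'I_n -> R :=
  match t with
  | 0 => z0
  | t'.+1 => br_step P sigma2 (br_chain P sigma2 z0 k u t') (k t') (u t')
  end.

End Defs.

From HB Require Import structures.
From mathcomp Require Import all_boot all_order all_algebra.
From mathcomp Require Import all_classical all_reals all_analysis.
From mathcomp Require Import ring lra.
Set Implicit Arguments. Unset Strict Implicit. Unset Printing Implicit Defensive.
Import Order.TTheory GRing.Theory Num.Theory.
Import numFieldNormedType.Exports.
Local Open Scope classical_set_scope.
Local Open Scope ring_scope.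

(* Say that agent k dominates the stubborn agents at z when every other agent j
   with z_j = 1 has sigma2 j <= sigma2 k.  With z_k = 1, row k of H(z) is e_k and
   the cost is sigma2 k; such an agent always does at least as well below 1.  If
   another agent is fully stubborn, take z_k = 0: W(z) is an absorbing chain whose
   row k converges to a distribution on stubborn agents, all of variance at most
   sigma2 k.  Otherwise state k is reached from everywhere within m steps with
   probability d > 0 (Doeblin), and for z_k = 1 - eta this forces
   d (1 - H_kk) <= m eta, so H_kk is close enough to 1 for
   sum_j H_kj^2 sigma2 j <= sigma2 k.  Hence a draw with U < 1 from the
   best-response set of such an agent lands below 1.
   Once all agents are below 1 every updating agent dominates the (absent)
   stubborn agents, so this persists; and n consecutive updates in decreasing
   order of variance bring every agent below 1.  Such a block of updates occurs
   almost surely, and all draws are < 1 almost surely. *)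

Section RowStochastic.
Variables (R : realType) (n : nat).
Implicit Types (A B W : 'M[R]_n).

Lemma row_stochastic_ge0 W i j : row_stochastic W -> 0 <= W i j.
Proof. by case=> + _; apply. Qed.

Lemma row_stochastic_sum_le1 W i (Q : pred 'I_n) :
  row_stochastic W -> \sum_(j | Q j) W i j <= 1.
Proof.
move=> [W0 W1]; rewrite -(W1 i) [leRHS](bigID Q) /= lerDl.
by apply: sumr_ge0 => j _; apply: W0.
Qed.

Lemma row_stochastic_le1 W i j : row_stochastic W -> W i j <= 1.
Proof. by move=> [W0 W1]; rewrite -(W1 i) (bigD1 j) //= lerDl sumr_ge0. Qed.

Lemma row_stochastic_sumC W i (Q : pred 'I_n) :
  row_stochastic W -> \sum_(j | ~~ Q j) W i j = 1 - \sum_(j | Q j) W i j.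
Proof. by move=> [_ W1]; have := W1 i; rewrite (bigID Q) /=; lra. Qed.

Lemma row_stochastic1 : row_stochastic (1%:M : 'M[R]_n).
Proof.
split=> [i j|i]; first by rewrite mxE ler0n.
by rewrite (bigD1 i) //= mxE eqxx big1 ?addr0 // => j /negbTE ji; rewrite mxE eq_sym ji.
Qed.

Lemma row_stochastic_mul A B :
  row_stochastic A -> row_stochastic B -> row_stochastic (A *m B).
Proof.
move=> [A0 A1] [B0 B1]; split=> [i j|i].
  by rewrite mxE; apply: sumr_ge0 => l _; apply: mulr_ge0.
under eq_bigr do rewrite mxE.
rewrite exchange_big /=.
under eq_bigr do rewrite -mulr_sumr B1 mulr1.
exact: A1.
Qed.

Lemma mpowS W t : mpow W t.+1 = W *m mpow W t. Proof. by []. Qed.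

Lemma mpowD W a b : mpow W (a + b) = mpow W a *m mpow W b.
Proof.
elim: a => [|a IH]; first by rewrite add0n mul1mx.
by rewrite addSn !mpowS IH mulmxA.
Qed.

Lemma mpow1 W : mpow W 1 = W. Proof. by rewrite mpowS mulmx1. Qed.

Lemma row_stochastic_mpow W t : row_stochastic W -> row_stochastic (mpow W t).
Proof.
move=> sW; elim: t => [|t IH]; [exact: row_stochastic1 | exact: row_stochastic_mul].
Qed.

Lemma mpow_ge_mul W a b i l j : row_stochastic W ->
  mpow W a i l * mpow W b l j <= mpow W (a + b) i j.
Proof.
move=> sW; rewrite mpowD mxE (bigD1 l) //= lerDl.
apply: sumr_ge0 => l' _.
by apply: mulr_ge0; apply: row_stochastic_ge0; apply: row_stochastic_mpow.
Qed.

Lemma mpow_diag_ge W a t : row_stochastic W -> W a a ^+ t <= mpow W t a a.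
Proof.
move=> sW; elim: t => [|t IH]; first by rewrite expr0 mxE eqxx.
apply: le_trans (mpow_ge_mul 1 t a a a sW).
by rewrite mpow1 exprS ler_wpM2l //; exact: row_stochastic_ge0.
Qed.

Lemma mpow_absorbing W s t j :
  (forall j, W s j = (s == j)%:R) -> mpow W t s j = (s == j)%:R.
Proof.
move=> Ws; elim: t j => [|t IH] j; first by rewrite mxE.
rewrite mpowS mxE (bigD1 s) //= Ws eqxx mul1r IH big1 ?addr0 // => l /negbTE ls.
by rewrite Ws eq_sym ls mul0r.
Qed.

Lemma mpow_reach W (G : rel 'I_n) (S : pred 'I_n) q :
  row_stochastic W -> 0 < q ->
  (forall a b, ~~ S a -> G a b -> q <= W a b) ->
  (forall a t, S a -> q ^+ t <= mpow W t a a) ->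
  forall a p, path G a p -> S (last a p) ->
  exists2 s, S s & q ^+ size p <= mpow W (size p) a s.
Proof.
move=> sW q0 qW qS a p; elim: p a => [|b p IH] a /=.
  by move=> _ Sa; exists a => //; apply: qS.
move=> /andP[ab pb] Sp; have [Sa | nSa] := boolP (S a).
  by exists a => //; apply: qS.
have [s Ss qs] := IH b pb Sp; exists s => //.
apply: le_trans (mpow_ge_mul 1 (size p) a b s sW).
rewrite mpow1 exprS.
by apply: ler_pM; [exact: ltW | exact: exprn_ge0 (ltW q0) | exact: qW | ].
Qed.

Lemma mpow_reach_within W (G : rel 'I_n) (S : pred 'I_n) q m :
  row_stochastic W -> 0 < q ->
  (forall a b, ~~ S a -> G a b -> q <= W a b) ->
  (forall a t, S a -> q ^+ t <= mpow W t a a) ->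
  (forall a, exists2 p, path G a p & S (last a p) /\ (size p <= m)%N) ->
  forall a, exists2 s, S s & q ^+ m <= mpow W m a s.
Proof.
move=> sW q0 qW qS paths a; have [p pa [Sp pm]] := paths a.
have [s Ss qs] := mpow_reach sW q0 qW qS pa Sp; exists s => //.
rewrite -(subnKC pm) exprD.
apply: le_trans (mpow_ge_mul (size p) (m - size p) a s s sW).
apply: ler_pM => //; [exact: exprn_ge0 (ltW q0) | exact: exprn_ge0 (ltW q0) | exact: qS].
Qed.

End RowStochastic.

Lemma connect_bounded_paths (T : finType) (G : rel T) (S : pred T) :
  (forall a b, connect G a b) -> (exists s, S s) ->
  exists m, forall a, exists2 p, path G a p & S (last a p) /\ (size p <= m)%N.
Proof.
move=> Gconn [s Ss].
have /fin_all_exists[f fP] : forall a, exists p, path G a p /\ S (last a p).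
  by move=> a; have /connectP[p pa sE] := Gconn a s; exists p; rewrite -sE.
exists (\max_a size (f a))%N => a; have [pa Sp] := fP a.
by exists (f a) => //; split => //; exact: (leq_bigmax_cond (F := fun a => size (f a))).
Qed.

Lemma finite_pos_lb (R : realDomainType) (I : finType) (Q : pred I) (F : I -> R) :
  (forall i, Q i -> 0 < F i) -> exists2 r, 0 < r <= 1 & forall i, Q i -> r <= F i.
Proof.
move=> F0; exists (\big[Num.min/1]_(i | Q i) F i); last by move=> i; exact: bigmin_le_cond.
by rewrite bigmin_le_id andbT; apply/bigmin_gtP; split => //; exact: ltr01.
Qed.

Lemma cvgn_of_cauchy (R : realType) (u : nat -> R) :
  (forall e, 0 < e -> exists N, forall t, (N <= t)%N -> `|u N - u t| < e) -> cvgn u.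
Proof.
move=> uC; apply/cauchy_cvgP; apply: cauchy_exP => e e0.
by have [N uN] := uC e e0; exists (u N); exists N.
Qed.

Lemma exists_expr_lt (R : realType) (x e : R) : 0 <= x < 1 -> 0 < e ->
  exists q, x ^+ q < e.
Proof.
move=> /andP[x0 x1] e0.
have x1' : `|x| < 1 by rewrite ger0_norm.
have /cvgr_dist_lt /(_ e e0) [N _ xN] := cvg_expr x1'.
exists N; have := xN N (leqnn N).
by rewrite sub0r normrN ger0_norm // exprn_ge0.
Qed.

Lemma one_sub_expr_le (R : realFieldType) (y : R) m :
  0 <= y <= 1 -> 1 - y ^+ m <= m%:R * (1 - y).
Proof.
move=> /andP[y0 y1]; elim: m => [|m IH]; first by rewrite expr0 subrr mul0r.
have : y ^+ m * (1 - y) <= 1 - y by rewrite ler_piMl ?subr_ge0 ?exprn_ile1.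
by rewrite exprS -natr1 mulrDl mul1r; lra.
Qed.

Lemma near1_small_defect (R : realFieldType) (c : R) m : 0 < c <= 1 ->
  exists2 y, 2^-1 <= y < 1 & m%:R * (1 - y) <= c.
Proof.
move=> /andP[c0 c1]; pose eta := c / m.+2%:R.
have eta0 : 0 < eta by rewrite divr_gt0.
have etaE : m.+2%:R * eta = c by rewrite mulrC divfK // pnatr_eq0.
have : 2 * eta <= m.+2%:R * eta by apply: ler_wpM2r; [exact: ltW | rewrite ler_nat].
exists (1 - eta); first by apply/andP; split; lra.
rewrite opprB addrC subrK -etaE.
by apply: ler_wpM2r; [exact: ltW | rewrite ler_nat leqW].
Qed.

Section PowerLimits.
Variables (R : realType) (n : nat).
Implicit Types (A W : 'M[R]_n).

Lemma row_stochastic_lim W i (H : 'I_n -> R) : row_stochastic W ->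
  (forall j, (fun t => mpow W t i j) @ \oo --> H j) ->
  (forall j, 0 <= H j) /\ \sum_j H j = 1.
Proof.
move=> sW WH; split=> [j|].
  apply: (cvgr_to_ge (WH j)); exists 0%N => // t _.
  by apply: row_stochastic_ge0; exact: row_stochastic_mpow.
have : (fun t => \sum_j mpow W t i j) @ \oo --> \sum_j H j.
  by apply: (@cvg_big R 'I_n +%R 0 xpredT (@add_continuous R)) => // j _; exact: WH.
have -> : (fun t => \sum_j mpow W t i j) = fun=> 1.
  by apply: funext => t; have [_ ->] := row_stochastic_mpow t sW.
by move/cvg_lim => <- //; exact: lim_cst.
Qed.

Lemma doeblin_contract A (g : 'I_n -> R) k d c : row_stochastic A -> 0 <= d ->
  (forall i, d <= A i k) -> (forall l l', g l - g l' <= c) ->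
  forall i i', \sum_l A i l * g l - \sum_l A i' l * g l <= (1 - d) * c.
Proof.
move=> sA d0 dA gc i i'.
have [lM _ gM] := @arg_maxP _ _ 'I_n k predT g isT.
have [lm _ gm] := @arg_minP _ _ 'I_n k predT g isT.
have rest a : \sum_(l | l != k) A a l = 1 - A a k.
  by rewrite (row_stochastic_sumC _ (pred1 k) sA) big_pred1_eq.
have up : \sum_l A i l * g l <= g lM - d * (g lM - g k).
  rewrite (bigD1 k) //=.
  have : \sum_(l | l != k) A i l * g l <= (1 - A i k) * g lM.
    rewrite -rest mulr_suml; apply: ler_sum => l _.
    by apply: ler_wpM2l; [exact: row_stochastic_ge0 sA | exact: gM].
  have : d * (g lM - g k) <= A i k * (g lM - g k).
    by apply: ler_wpM2r; [rewrite subr_ge0; exact: gM | exact: dA].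
  lra.
have lo : g lm + d * (g k - g lm) <= \sum_l A i' l * g l.
  rewrite (bigD1 k) //=.
  have : (1 - A i' k) * g lm <= \sum_(l | l != k) A i' l * g l.
    rewrite -rest mulr_suml; apply: ler_sum => l _.
    by apply: ler_wpM2l; [exact: row_stochastic_ge0 sA | exact: gm].
  have : d * (g k - g lm) <= A i' k * (g k - g lm).
    by apply: ler_wpM2r; [rewrite subr_ge0; exact: gm | exact: dA].
  lra.
have : (1 - d) * (g lM - g lm) <= (1 - d) * c.
  apply: ler_wpM2l; last exact: gc.
  by rewrite subr_ge0; exact: le_trans (dA i) (row_stochastic_le1 _ _ sA).
lra.
Qed.

Lemma dist_row_average_le A (g : 'I_n -> R) c i i' : row_stochastic A ->
  (forall l l', g l - g l' <= c) -> `|g i' - \sum_a A i a * g a| <= c.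
Proof.
move=> [A0 A1] gc.
have avg x : x = \sum_a A i a * x by rewrite -mulr_suml A1 mul1r.
rewrite distrC [g i'](avg) -sumrB ler_norml; apply/andP; split.
  rewrite [- c](avg); apply: ler_sum => a _; rewrite -mulrBr.
  by apply: ler_wpM2l => //; rewrite lerNl opprB gc.
by rewrite [c](avg); apply: ler_sum => a _; rewrite -mulrBr; apply: ler_wpM2l.
Qed.

Section AbsorbingChain.
Variables (W : 'M[R]_n) (S : pred 'I_n) (m : nat) (d : R).
Hypotheses (sW : row_stochastic W) (d0 : 0 < d) (d1 : d <= 1).
Hypothesis absorbing : forall s j, S s -> W s j = (s == j)%:R.
Hypothesis escape : forall a, ~~ S a -> \sum_(l | ~~ S l) mpow W m a l <= 1 - d.

Let d_bounds : 0 <= 1 - d < 1.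
Proof. by move: d0 d1 => ? ?; apply/andP; split; lra. Qed.

Let transient_mass i t := \sum_(l | ~~ S l) mpow W t i l.

Lemma mpowD_absorbing i j t p : mpow W (t + p) i j =
  (if S j then mpow W t i j else 0) + \sum_(a | ~~ S a) mpow W t i a * mpow W p a j.
Proof.
have Wp a : S a -> mpow W p a j = (a == j)%:R.
  by move=> Sa; apply: mpow_absorbing => l; exact: absorbing.
rewrite mpowD mxE (bigID S) /=; congr (_ + _); case: ifP => Sj.
  rewrite (bigD1 j) //= Wp // eqxx mulr1 big1 ?addr0 // => a /andP[Sa /negbTE aj].
  by rewrite Wp // aj mulr0.
apply: big1 => a Sa; rewrite Wp //.
by case: eqP Sa => [->|]; rewrite ?Sj ?mulr0.
Qed.

Lemma transient_mass_contract p c i t : 0 <= c ->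
  (forall a, ~~ S a -> \sum_(l | ~~ S l) mpow W p a l <= c) ->
  transient_mass i (t + p) <= c * transient_mass i t.
Proof.
move=> c0 Wc; rewrite /transient_mass.
under eq_bigr => l Sl do rewrite mpowD_absorbing (negbTE Sl) add0r.
rewrite exchange_big /= mulr_sumr; apply: ler_sum => a Sa.
rewrite -mulr_sumr mulrC ler_wpM2r ?Wc //.
by apply: row_stochastic_ge0; exact: row_stochastic_mpow.
Qed.

Lemma transient_mass_geom i q t : (q * m <= t)%N -> transient_mass i t <= (1 - d) ^+ q.
Proof.
elim: q t => [|q IH] t qt.
  by rewrite expr0; apply: row_stochastic_sum_le1; exact: row_stochastic_mpow.
have mt : (m <= t)%N by apply: leq_trans qt; rewrite mulSn leq_addr.
have /andP[d1' _] := d_bounds.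
rewrite -(subnK mt) exprS.
apply: le_trans (@transient_mass_contract m (1 - d) i (t - m) d1' escape) _.
by apply: ler_wpM2l => //; apply: IH; rewrite leq_subRL // -mulSn.
Qed.

Lemma mpow_transient_le i j t : ~~ S j -> mpow W t i j <= transient_mass i t.
Proof.
move=> Sj; rewrite /transient_mass (bigD1 j) //= lerDl.
by apply: sumr_ge0 => l _; apply: row_stochastic_ge0; exact: row_stochastic_mpow.
Qed.

Lemma mpow_absorbing_cauchy i j t p :
  `|mpow W t i j - mpow W (t + p) i j| <= transient_mass i t.
Proof.
have W0 a l r : 0 <= mpow W r a l.
  by apply: row_stochastic_ge0; exact: row_stochastic_mpow.
rewrite mpowD_absorbing; set X := \sum_(a | ~~ S a) _.
have X0 : 0 <= X by apply: sumr_ge0 => a _; rewrite mulr_ge0.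
have X1 : X <= transient_mass i t.
  apply: ler_sum => a _; rewrite ler_piMr //.
  by apply: row_stochastic_le1; exact: row_stochastic_mpow.
case: ifP => Sj.
  by rewrite opprD addrA subrr add0r normrN ger0_norm.
have := mpow_transient_le i t (negbT Sj); have := W0 i j t.
by rewrite add0r ler_norml; lra.
Qed.

Lemma absorbing_mpow_cvg i j :
  (fun t => mpow W t i j) @ \oo --> limn (fun t => mpow W t i j).
Proof.
apply: cvgn_of_cauchy => e e0.
have [q qe] := exists_expr_lt d_bounds e0.
exists (q * m)%N => t qt; rewrite -(subnKC qt).
apply: le_lt_trans (mpow_absorbing_cauchy _ _ _ _) _.
exact: le_lt_trans (transient_mass_geom _ (leqnn _)) qe.
Qed.

Lemma absorbing_mpow_lim_transient i j :
  ~~ S j -> limn (fun t => mpow W t i j) = 0.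
Proof.
move=> Sj; apply/eqP; rewrite eq_le; apply/andP; split; last first.
  apply: (cvgr_to_ge (@absorbing_mpow_cvg i j)); exists 0%N => // t _.
  by apply: row_stochastic_ge0; exact: row_stochastic_mpow.
rewrite leNgt; apply/negP => L0.
have [q qL] := exists_expr_lt d_bounds L0.
suff : limn (fun t => mpow W t i j) <= (1 - d) ^+ q by rewrite leNgt qL.
apply: (cvgr_to_le (@absorbing_mpow_cvg i j)); exists (q * m)%N => // t qt.
exact: le_trans (mpow_transient_le _ _ Sj) (transient_mass_geom _ qt).
Qed.

End AbsorbingChain.

Section DoeblinChain.
Variables (W : 'M[R]_n) (k : 'I_n) (m : nat) (d : R).
Hypotheses (sW : row_stochastic W) (d0 : 0 < d).
Hypothesis minorization : forall a, d <= mpow W m a k.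

Let d_bounds : 0 <= 1 - d < 1.
Proof.
have := row_stochastic_le1 k k (row_stochastic_mpow m sW).
by have := minorization k; move: d0 => ? ? ?; apply/andP; split; lra.
Qed.

Lemma mpow_column_osc j q t : (q * m <= t)%N ->
  forall l l', mpow W t l j - mpow W t l' j <= (1 - d) ^+ q.
Proof.
elim: q t => [|q IH] t qt l l'.
  have := row_stochastic_le1 l j (row_stochastic_mpow t sW).
  have := row_stochastic_ge0 l' j (row_stochastic_mpow t sW).
  by rewrite expr0; lra.
have mt : (m <= t)%N by apply: leq_trans qt; rewrite mulSn leq_addr.
rewrite -(subnKC mt) !mpowD !mxE exprS.
apply: doeblin_contract (ltW d0) minorization _ l l'; first exact: row_stochastic_mpow.
by apply: IH; rewrite leq_subRL // -mulSn.
Qed.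

Lemma doeblin_mpow_cvg i j :
  (fun t => mpow W t i j) @ \oo --> limn (fun t => mpow W t i j).
Proof.
apply: cvgn_of_cauchy => e e0.
have [q qe] := exists_expr_lt d_bounds e0.
exists (q * m)%N => t qt; apply: le_lt_trans qe.
rewrite -(subnK qt) mpowD mxE.
apply: (dist_row_average_le (g := fun a => mpow W (q * m) a j)).
  exact: row_stochastic_mpow.
exact: mpow_column_osc.
Qed.

Lemma doeblin_diag_lim (h := limn (fun t => mpow W t k k)) :
  (1 - h) * d <= h * (1 - mpow W m k k).
Proof.
set a := mpow W m k k.
have step t : mpow W t k k * a + (1 - mpow W t k k) * d <= mpow W (t + m) k k.
  rewrite mpowD mxE (bigD1 k) //= lerD2l.
  have := row_stochastic_sumC k (pred1 k) (row_stochastic_mpow t sW).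
  rewrite big_pred1_eq => <-.
  rewrite mulr_suml; apply: ler_sum => l _; apply: ler_wpM2l => //.
  by apply: row_stochastic_ge0; exact: row_stochastic_mpow.
have cu := @doeblin_mpow_cvg k k.
have cs : (fun t => mpow W (t + m) k k) @ \oo --> h.
  by rewrite (cvg_shiftn m (fun t => mpow W t k k)).
have : (fun t => mpow W (t + m) k k - (mpow W t k k * a + (1 - mpow W t k k) * d))
    @ \oo --> h - (h * a + (1 - h) * d).
  apply: cvgB => //; apply: cvgD; apply: cvgM => //; try apply: cvgB => //;
    exact: cvg_cst.
move=> /cvgr_to_ge hd.
have : 0 <= h - (h * a + (1 - h) * d).
  by apply: hd; exists 0%N => // t _; rewrite subr_ge0.
lra.
Qed.

Lemma doeblin_diag_lim_ge y : 0 <= y <= 1 -> y <= W k k ->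
  (1 - limn (fun t => mpow W t k k)) * d <= m%:R * (1 - y).
Proof.
move=> y01 yW; apply: le_trans (doeblin_diag_lim) _.
have h1 : limn (fun t => mpow W t k k) <= 1.
  apply: (cvgr_to_le (@doeblin_mpow_cvg k k)); exists 0%N => // t _.
  by apply: row_stochastic_le1; exact: row_stochastic_mpow.
have ym : y ^+ m <= mpow W m k k.
  apply: le_trans (mpow_diag_ge k m sW); have /andP[y0 _] := y01.
  by apply: lerXn2r; rewrite ?nnegrE //; exact: le_trans yW.
apply: le_trans (_ : 1 - mpow W m k k <= _).
  rewrite ler_piMl // subr_ge0.
  by apply: row_stochastic_le1; exact: row_stochastic_mpow.
by apply: le_trans (one_sub_expr_le m y01); rewrite lerD2l lerN2.
Qed.

End DoeblinChain.

End PowerLimits.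

Section WeightedSquares.
Variables (R : realFieldType) (n : nat) (h v : 'I_n -> R).
Hypotheses (h0 : forall j, 0 <= h j) (h1 : \sum_j h j = 1).

Lemma weight_le1 j : h j <= 1.
Proof. by rewrite -h1 (bigD1 j) //= lerDl sumr_ge0. Qed.

Lemma sqr_le_weight j : h j ^+ 2 <= h j.
Proof. by rewrite expr2 ler_piMr ?weight_le1. Qed.

Lemma weighted_sqr_sum_le c : 0 <= c -> (forall j, 0 <= v j) ->
  (forall j, h j = 0 \/ v j <= c) -> \sum_j h j ^+ 2 * v j <= c.
Proof.
move=> c0 s0 hs; apply: (@le_trans _ _ (\sum_j h j * c)); last first.
  by rewrite -mulr_suml h1 mul1r.
apply: ler_sum => j _; have [->|sc] := hs j; first by rewrite expr0n mul0r mul0r.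
by apply: ler_pM => //; [exact: sqr_ge0 | exact: sqr_le_weight].
Qed.

Lemma weighted_sqr_sum_le_diag k : (forall j, 0 < v j) ->
  (1 - h k) * \sum_j v j <= v k -> \sum_j h j ^+ 2 * v j <= v k.
Proof.
move=> s0 hk; set M := \sum_j v j.
have sM j : v j <= M by rewrite /M (bigD1 j) //= lerDl sumr_ge0 // => i _; exact: ltW.
have rest : \sum_(j | j != k) h j = 1 - h k by have := h1; rewrite (bigD1 k) //=; lra.
have hjk j : j != k -> h j <= 1 - h k by move=> jk; rewrite -rest (bigD1 j) //= lerDl sumr_ge0.
have off : \sum_(j | j != k) h j ^+ 2 * v j <= (1 - h k) * v k.
  apply: (@le_trans _ _ (\sum_(j | j != k) h j * ((1 - h k) * M))).
    apply: ler_sum => j jk; rewrite expr2 -mulrA ler_wpM2l //.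
    by apply: ler_pM; rewrite ?h0 ?hjk ?sM ?ltW.
  by rewrite -mulr_suml rest; apply: ler_wpM2l; rewrite ?subr_ge0 ?weight_le1.
rewrite (bigD1 k) //=.
have := sqr_le_weight k; have := s0 k; move: off; nra.
Qed.

End WeightedSquares.

Section InfSupInterpolation.
Variables (R : realType) (B : set R).
Hypothesis B01 : forall b, B b -> 0 <= b <= 1.

Let inf_sup_bounds : B !=set0 -> [/\ 0 <= inf B, inf B <= sup B & sup B <= 1].
Proof.
move=> [b Bb]; have hs : has_sup B by split; [exists b | exists 1 => x /B01 /andP[]].
have hl : has_lbound B by exists 0 => x /B01 /andP[].
split.
- by apply: lb_le_inf; [exists b | move=> x /B01 /andP[]].
- exact: le_trans (ge_inf hl Bb) (sup_upper_bound hs Bb).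
- by apply: ge_sup; [exists b | move=> x /B01 /andP[]].
Qed.

Lemma inf_sup_interp_in01 u : 0 <= u <= 1 -> 0 <= inf B + u * (sup B - inf B) <= 1.
Proof.
move=> /andP[u0 u1]; have [/inf_sup_bounds[i0 iS s1]|B0] := pselect (B !=set0).
  have : u * (sup B - inf B) <= sup B - inf B by rewrite ler_piMl ?subr_ge0.
  have : 0 <= u * (sup B - inf B) by rewrite mulr_ge0 ?subr_ge0.
  by move=> ? ?; apply/andP; split; lra.
rewrite (_ : B = set0); last by apply/seteqP; split => x // Bx; apply: B0; exists x.
by rewrite inf0 sup0 subrr mulr0 addr0 lexx ler01.
Qed.

Lemma inf_sup_interp_lt1 u : 0 <= u < 1 -> (B !=set0 -> exists2 b, B b & b < 1) ->
  inf B + u * (sup B - inf B) < 1.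
Proof.
move=> /andP[u0 u1] Blt1; have [BN0|B0] := pselect (B !=set0).
  have [i0 iS s1] := inf_sup_bounds BN0; have [b Bb b1] := Blt1 BN0.
  have hl : has_lbound B by exists 0 => x /B01 /andP[].
  have ib := ge_inf hl Bb.
  have : u * (sup B - inf B) <= u * (1 - inf B) by rewrite ler_wpM2l // lerB.
  have : 0 < (1 - u) * (1 - inf B) by rewrite mulr_gt0 // subr_gt0 //; lra.
  by move=> ? ?; nra.
rewrite (_ : B = set0); last by apply/seteqP; split => x // Bx; apply: B0; exists x.
by rewrite inf0 sup0 subrr mulr0 addr0 ltr01.
Qed.

End InfSupInterpolation.


Section OpinionModel.
Variables (R : realType) (n : nat) (P : 'M[R]_n) (sigma2 : 'I_n -> R).
Hypotheses (hP : row_stochastic P) (hirr : irreducible_mx P).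
Hypothesis hsig : forall j, 0 < sigma2 j.

Definition unit_cube (z : 'I_n -> R) := forall i, 0 <= z i <= 1.

Lemma WmxE z i j : Wmx P z i j = (1 - z i) * P i j + z i *+ (i == j).
Proof. by rewrite /Wmx mxE mulmxBl mul1mx mul_diag_mx !mxE mulrBl mul1r. Qed.

Lemma setc_same (z : 'I_n -> R) k y : setc z k y k = y.
Proof. by rewrite /setc eqxx. Qed.

Lemma setc_other (z : 'I_n -> R) k y j : j != k -> setc z k y j = z j.
Proof. by rewrite /setc => /negbTE ->. Qed.

Lemma unit_cube_setc z k y : unit_cube z -> 0 <= y <= 1 -> unit_cube (setc z k y).
Proof. by move=> hz hy i; rewrite /setc; case: eqP. Qed.

Lemma Wmx_row_stochastic z : unit_cube z -> row_stochastic (Wmx P z).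
Proof.
move=> hz; have [P0 P1] := hP; split=> [i j|i].
  have /andP[z0 z1] := hz i.
  by rewrite WmxE addr_ge0 ?mulrn_wge0 ?mulr_ge0 ?subr_ge0.
under eq_bigr do rewrite WmxE.
rewrite big_split /= -mulr_sumr P1 mulr1 (bigD1 i) //= eqxx mulr1n big1 ?addr0.
  by rewrite subrK.
by move=> j /negbTE ji; rewrite eq_sym ji mulr0n.
Qed.

Lemma Wmx_absorbing z s j : z s = 1 -> Wmx P z s j = (s == j)%:R.
Proof. by move=> zs; rewrite WmxE zs subrr mul0r add0r. Qed.

Lemma Wmx_ge_edge z a b : 0 <= z a -> (1 - z a) * P a b <= Wmx P z a b.
Proof. by move=> za; rewrite WmxE lerDl mulrn_wge0. Qed.

Lemma Wmx_diag_ge z a : 0 <= z a <= 1 -> z a <= Wmx P z a a.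
Proof.
move=> /andP[z0 z1]; rewrite WmxE eqxx mulr1n lerDr mulr_ge0 ?subr_ge0 //.
by have [P0 _] := hP.
Qed.

Lemma cost_setc1 k z : cost P sigma2 k (setc z k 1) = sigma2 k.
Proof.
have Hk j : Hmx P (setc z k 1) k j = (k == j)%:R.
  rewrite /Hmx (_ : (fun t => _) = fun=> (k == j)%:R) ?lim_cst //.
  by apply: funext => t; apply: mpow_absorbing => l; rewrite Wmx_absorbing // /setc eqxx.
rewrite /cost (bigD1 k) //= Hk eqxx expr1n mul1r big1 ?addr0 // => j /negbTE jk.
by rewrite Hk eq_sym jk expr0n mul0r.
Qed.

Lemma Wmx_edge_lb z (S : pred 'I_n) : (forall a, ~~ S a -> z a < 1) ->
  exists2 r, 0 < r <= 1 &
    forall a b, ~~ S a -> graph_rel P a b -> r <= (1 - z a) * P a b.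
Proof.
move=> zS.
have [r r01 rP] : exists2 r, 0 < r <= 1 & forall ab : 'I_n * 'I_n,
    ~~ S ab.1 && graph_rel P ab.1 ab.2 -> r <= (1 - z ab.1) * P ab.1 ab.2.
  apply: finite_pos_lb => -[a b] /andP[Sa Pab].
  by rewrite mulr_gt0 // subr_gt0; exact: zS.
by exists r => // a b Sa Pab; apply: (rP (a, b)); rewrite /= Sa.
Qed.

Lemma cost_le_absorbed k z : unit_cube z -> z k < 1 ->
  (exists s, z s = 1) -> (forall s, z s = 1 -> sigma2 s <= sigma2 k) ->
  cost P sigma2 k z <= sigma2 k.
Proof.
move=> hz zk [s0 zs0] dom.
pose S : pred 'I_n := fun s => z s == 1.
have zS a : ~~ S a -> z a < 1.
  by have /andP[_ za] := hz a; rewrite lt_neqAle za andbT.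
have [r /andP[r0 r1] rP] := Wmx_edge_lb zS.
have [m paths] := connect_bounded_paths hirr (ex_intro S s0 (introT eqP zs0)).
pose W := Wmx P z; have sW : row_stochastic W := Wmx_row_stochastic hz.
have absS s j : S s -> W s j = (s == j)%:R by move=> /eqP; exact: Wmx_absorbing.
have edges a b : ~~ S a -> graph_rel P a b -> r <= W a b.
  move=> Sa Pab; apply: le_trans (rP a b Sa Pab) _.
  by apply: Wmx_ge_edge; have /andP[] := hz a.
have stay a t : S a -> r ^+ t <= mpow W t a a.
  by move=> Sa; rewrite (mpow_absorbing t a (fun j => absS a j Sa)) eqxx exprn_ile1 // ltW.
have reach := mpow_reach_within sW r0 edges stay paths.
have escape a : ~~ S a -> \sum_(l | ~~ S l) mpow W m a l <= 1 - r ^+ m.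
  move=> _; have [s Ss rs] := reach a.
  rewrite (row_stochastic_sumC a S (row_stochastic_mpow m sW)) lerD2l lerN2.
  apply: le_trans rs _; rewrite (bigD1 s) //= lerDl.
  by apply: sumr_ge0 => l _; apply: row_stochastic_ge0; exact: row_stochastic_mpow.
have rm0 : 0 < r ^+ m := exprn_gt0 m r0.
have rm1 : r ^+ m <= 1 := exprn_ile1 m (ltW r0) r1.
have Hcvg j := absorbing_mpow_cvg sW rm0 rm1 absS escape (i := k) (j := j).
have [H0 H1] := row_stochastic_lim sW Hcvg.
apply: weighted_sqr_sum_le => //; first exact: ltW.
  by move=> j; exact: ltW.
move=> j; case Sj: (S j); first by right; apply: dom; exact/eqP.
by left; apply: (absorbing_mpow_lim_transient sW rm0 rm1 absS escape); rewrite Sj.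
Qed.

Lemma Wmx_setc_minorization k z : unit_cube z -> (forall j, j != k -> z j < 1) ->
  exists q m, 0 < q <= 2^-1 /\ forall y, 2^-1 <= y <= 1 ->
    forall a, q ^+ m <= mpow (Wmx P (setc z k y)) m a k.
Proof.
move=> hz zk.
have [r /andP[r0 r1] rP] := Wmx_edge_lb (S := pred1 k) zk.
have [m paths] := @connect_bounded_paths _ _ (pred1 k) hirr (ex_intro _ k (eqxx k)).
have q0 : 0 < r / 2 by rewrite divr_gt0.
exists (r / 2), m; split=> [|y /andP[yh y1] a]; first by rewrite q0 /=; lra.
have y01 : 0 <= y <= 1 by apply/andP; split; lra.
have hz' := unit_cube_setc k hz y01.
pose W := Wmx P (setc z k y); have sW : row_stochastic W := Wmx_row_stochastic hz'.
have edges a' b : a' != k -> graph_rel P a' b -> r / 2 <= W a' b.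
  move=> ak Pab; apply: le_trans (le_trans _ (rP a' b ak Pab)) _; first lra.
  by rewrite -(setc_other z y ak); apply: Wmx_ge_edge; have /andP[] := hz' a'.
have stay a' t : a' == k -> (r / 2) ^+ t <= mpow W t a' a'.
  move=> /eqP ->; apply: le_trans (mpow_diag_ge k t sW).
  have : y <= W k k by have := Wmx_diag_ge (hz' k); rewrite setc_same.
  by move=> yW; apply: lerXn2r; rewrite ?nnegrE ?(ltW q0); lra.
by have [s /eqP -> ] := mpow_reach_within sW q0 edges stay paths a.
Qed.

Lemma cost_setc_near1_le k z : unit_cube z -> (forall j, j != k -> z j < 1) ->
  exists2 y, 0 <= y < 1 & cost P sigma2 k (setc z k y) <= sigma2 k.
Proof.
move=> hz zk.
have [q [m [/andP[q0 qh] minor]]] := Wmx_setc_minorization hz zk.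
pose d := q ^+ m; pose M := \sum_j sigma2 j.
have d0 : 0 < d := exprn_gt0 m q0.
have d1 : d <= 1 by apply: exprn_ile1; lra.
have sk0 := hsig k.
have skM : sigma2 k <= M by rewrite /M (bigD1 k) //= lerDl sumr_ge0 // => j _; exact: ltW.
have c01 : 0 < d * sigma2 k / M <= 1.
  apply/andP; split; first by rewrite divr_gt0 ?mulr_gt0 //; lra.
  by rewrite ler_pdivrMr ?mul1r; [nra | lra].
have [y /andP[yh y1] ydef] := near1_small_defect m c01.
have y01 : 0 <= y <= 1 by apply/andP; split; lra.
exists y; first by apply/andP; split; lra.
have hz' := unit_cube_setc k hz y01.
pose W := Wmx P (setc z k y); have sW : row_stochastic W := Wmx_row_stochastic hz'.
have dW : forall a, d <= mpow W m a k by apply: minor; rewrite yh; exact: ltW.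
have yW : y <= W k k by have := Wmx_diag_ge (hz' k); rewrite setc_same.
have := le_trans (doeblin_diag_lim_ge sW d0 dW y01 yW) ydef.
rewrite ler_pdivlMr; last by lra.
have Hcvg j := doeblin_mpow_cvg sW d0 dW (i := k) (j := j).
have [H0 H1] := row_stochastic_lim sW Hcvg.
move=> hd; apply: weighted_sqr_sum_le_diag => //.
by rewrite /= /Hmx -/W -/M -(ler_pM2l d0); nra.
Qed.

Definition dominates_stubborn k (z : 'I_n -> R) :=
  forall j, j != k -> z j = 1 -> sigma2 j <= sigma2 k.


Lemma cost_below1_le_cost1 k z : unit_cube z -> dominates_stubborn k z ->
  exists2 y, 0 <= y < 1 & cost P sigma2 k (setc z k y) <= cost P sigma2 k (setc z k 1).
Proof.
move=> hz dom; rewrite cost_setc1.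
have [[j /andP[jk /eqP zj]] | none] := pselect (exists j, (j != k) && (z j == 1)).
  exists 0; first by rewrite lexx ltr01.
  apply: cost_le_absorbed.
  - by apply: unit_cube_setc; rewrite // lexx ler01.
  - by rewrite setc_same ltr01.
  - by exists j; rewrite setc_other.
  move=> s; have [->|sk] := eqVneq s k; first by rewrite setc_same => /eqP; rewrite eq_sym oner_eq0.
  by rewrite setc_other //; exact: dom.
apply: cost_setc_near1_le => // j jk; have /andP[_ zj1] := hz j; rewrite lt_neqAle zj1 andbT.
by apply/negP => /eqP zj; apply: none; exists j; rewrite jk zj eqxx.
Qed.

Lemma best_resp_has_lt1 k z : unit_cube z -> dominates_stubborn k z ->
  best_resp P sigma2 k z !=set0 -> exists2 b, best_resp P sigma2 k z b & b < 1.
Proof.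
move=> hz dom [b [/andP[b0 b1] bmin]]; have [b_lt1|b_ge1] := ltP b 1.
  by exists b => //; split; rewrite ?b0.
have b_eq1 : b = 1 by apply/eqP; rewrite eq_le b1 b_ge1.
have [y /andP[y0 y1] cy] := cost_below1_le_cost1 hz dom.
exists y => //; split=> [|x x01]; first by rewrite y0 ltW.
by apply: le_trans cy _; rewrite -b_eq1; exact: bmin.
Qed.

Lemma best_resp_in01 k z b : best_resp P sigma2 k z b -> 0 <= b <= 1.
Proof. by case. Qed.

Lemma br_step_unit_cube z k u : unit_cube z -> 0 <= u <= 1 ->
  unit_cube (br_step P sigma2 z k u).
Proof.
move=> hz u01; apply: unit_cube_setc => //.
by have := inf_sup_interp_in01 (@best_resp_in01 k z) u01.
Qed.

Lemma br_step_lt1 z k u : unit_cube z -> 0 <= u < 1 -> dominates_stubborn k z ->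
  br_step P sigma2 z k u k < 1.
Proof.
move=> hz u01 dom; rewrite /br_step setc_same.
apply: (inf_sup_interp_lt1 (@best_resp_in01 k z) u01).
exact: best_resp_has_lt1.
Qed.

Section Trajectory.
Variables (z0 : 'I_n -> R) (kk : nat -> 'I_n) (u : nat -> R).
Hypotheses (hz0 : unit_cube z0) (hu : forall t, 0 <= u t < 1).

Let Z := br_chain P sigma2 z0 kk u.

Lemma br_chain_unit_cube t : unit_cube (Z t).
Proof.
elim: t => [|t IH] //; apply: br_step_unit_cube => //.
by have /andP[u0 /ltW u1] := hu t; rewrite u0.
Qed.

Lemma br_chain_update_lt1 t : dominates_stubborn (kk t) (Z t) -> Z t.+1 (kk t) < 1.
Proof. exact: br_step_lt1 (br_chain_unit_cube t) (hu t). Qed.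

Lemma br_chain_other t j : j != kk t -> Z t.+1 j = Z t j.
Proof. exact: setc_other. Qed.

Lemma br_chain_lt1_forever t0 : (forall i, Z t0 i < 1) ->
  forall t, (t0 <= t)%N -> forall i, Z t i < 1.
Proof.
move=> Zt0; elim=> [|t IH]; first by rewrite leqn0 => /eqP <-.
rewrite leq_eqVlt => /orP[/eqP <- //|]; rewrite ltnS => /IH Zt i.
have [->|ik] := eqVneq i (kk t); last by rewrite br_chain_other.
by apply: br_chain_update_lt1 => j _ Zj; have := Zt j; rewrite Zj ltxx.
Qed.

Definition variance_order := sort (fun a b => sigma2 b <= sigma2 a) (enum 'I_n).

Lemma br_chain_sweep a0 t0 :
  (forall i, (i < n)%N -> kk (t0 + i) = nth a0 variance_order i) ->
  forall j, Z (t0 + n) j < 1.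
Proof.
move=> sweep.
have ge_rel : transitive (fun a b : 'I_n => sigma2 b <= sigma2 a).
  by move=> y x z xy yz; exact: le_trans yz xy.
have sorted_order : sorted (fun a b => sigma2 b <= sigma2 a) variance_order.
  by apply: sort_sorted => a b; exact: le_total.
have size_order : size variance_order = n by rewrite size_sort size_enum_ord.
have index_lt j : (index j variance_order < n)%N.
  by have := index_mem j variance_order; rewrite mem_sort mem_enum size_order.
suff swept i : (i <= n)%N -> forall j, (index j variance_order < i)%N -> Z (t0 + i) j < 1.
  by move=> j; exact: swept.
elim: i => [|i IH] iln j //; have iln' : (i < n)%N by [].
rewrite addnS; have [-> _|ja ji] := eqVneq j (nth a0 variance_order i).
  rewrite -(sweep i iln'); apply: br_chain_update_lt1 => l _ Zl.
  have il : (i <= index l variance_order)%N.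
    by rewrite leqNgt; apply/negP => /(IH (ltnW iln')); rewrite Zl ltxx.
  rewrite sweep // -(nth_index a0 (_ : l \in variance_order)); last first.
    by rewrite mem_sort mem_enum.
  by apply: (sorted_leq_nth ge_rel) => //; rewrite ?inE ?size_order.
rewrite br_chain_other ?sweep //; apply: IH; first exact: ltnW.
rewrite ltnS leq_eqVlt in ji; case/orP: ji => // /eqP ji.
by move: ja; rewrite -ji nth_index ?eqxx // mem_sort mem_enum.
Qed.

End Trajectory.

End OpinionModel.

Lemma measure_bigsetU_le d (T : measurableType d) (R : realType)
    (mu : {measure set T -> \bar R}) (I : Type) (r : seq I) (P : pred I) (F : I -> set T) :
  (forall i, measurable (F i)) ->
  (mu (\big[setU/set0]_(i <- r | P i) F i) <= \sum_(i <- r | P i) mu (F i))%E.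
Proof.
move=> mF; elim: r => [|i r IH]; first by rewrite !big_nil measure0.
rewrite !big_cons; case: ifP => // _.
apply: le_trans (measureU2 _ _ _) _ => //; first exact: bigsetU_measurable.
exact: leeD2l.
Qed.

Lemma le_geometric_eq0 (R : realType) (x : \bar R) (g : R) : (0 <= x)%E -> 0 <= g < 1 ->
  (forall B, x <= (g ^+ B)%:E)%E -> x = 0%E.
Proof.
move=> x0 g01 xg; have := xg 0%N; case: x x0 xg => [r| |] //= r0 xg _.
rewrite lee_fin in r0; congr (_%:E); apply/eqP; rewrite eq_le r0 andbT leNgt.
apply/negP => r_gt0; have [B gB] := exists_expr_lt g01 r_gt0.
by have := xg B; rewrite lee_fin leNgt gB.
Qed.

Lemma lebesgue_unit_itv (R : realType) :
  lebesgue_measure (`[0%R, 1%R]%classic : set R) = 1%E.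
Proof. by rewrite lebesgue_measure_itv /= lte_fin ltr01 oppr0 adde0. Qed.

Section ChoiceProcess.
Variables (R : realType) (n : nat) (d : measure_display) (Omega : measurableType d).
Variables (Pr : probability Omega R) (K : nat -> Omega -> 'I_n) (U : nat -> Omega -> R).
Hypotheses (hn : (0 < n)%N) (hKm : forall t k, measurable (K t @^-1` [set k])).
Hypothesis hUm : forall t, measurable_fun setT (U t).

Definition choice_cylinder N (k : nat -> 'I_n) (C : nat -> set R) :=
  [set w | forall t, (t < N)%N -> K t w = k t /\ C t (U t w)].

Hypothesis cylinder_law : forall N k C, (forall t, measurable (C t)) ->
  Pr (choice_cylinder N k C) =
  (\big[*%E/1%E]_(t < N) ((n%:R^-1)%:E * lebesgue_measure (C t `&` `[0%R, 1%R]%classic)))%E.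

Lemma measurable_U_preimage t (A : set R) : measurable A -> measurable (U t @^-1` A).
Proof. by move=> mA; rewrite -[_ @^-1` _]setTI; exact: hUm. Qed.

Lemma choice_cylinder_measurable N k C : (forall t, measurable (C t)) ->
  measurable (choice_cylinder N k C).
Proof.
move=> mC; rewrite (_ : choice_cylinder N k C =
    \bigcap_(t in [set t | (t < N)%N]) (K t @^-1` [set k t] `&` U t @^-1` C t)).
  by apply: bigcap_measurableType => t _; apply: measurableI => //; exact: measurable_U_preimage.
by apply/seteqP; split => w /= wC t /wC.
Qed.

Lemma prob_cylinder_cover_le (I : finType) (Q : pred I) (k : I -> nat -> 'I_n) N C E :
  measurable E -> (forall t, measurable (C t)) ->
  (forall w, E w -> exists2 g, Q g & choice_cylinder N (k g) C w) ->
  (Pr E <= \sum_(g | Q g)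
    \big[*%E/1%E]_(t < N) ((n%:R^-1)%:E * lebesgue_measure (C t `&` `[0%R, 1%R]%classic)))%E.
Proof.
move=> mE mC Ecov.
under eq_bigr => g _ do rewrite -(cylinder_law N (k g) mC).
apply: le_trans (measure_bigsetU_le Pr _ Q (fun g => choice_cylinder_measurable N (k g) mC)).
apply: le_measure; rewrite ?inE //.
  by apply: bigsetU_measurable => g _; exact: choice_cylinder_measurable.
move=> w /Ecov[g Qg wg]; rewrite -bigcup_seq_cond.
by exists g => //=; rewrite mem_index_enum.
Qed.

Lemma draw_outside_unit_null t : Pr (U t @^-1` ~` `[0%R, 1%R[%classic) = 0%E.
Proof.
pose C s : set R := if s == t then ~` `[0%R, 1%R[%classic else setT.
have mC s : measurable (C s).
  by rewrite /C; case: eqP => _; [apply: measurableC; exact: measurable_itv | exact: measurableT].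
have mE : measurable (U t @^-1` ~` `[0%R, 1%R[%classic).
  by apply: measurable_U_preimage; apply: measurableC; exact: measurable_itv.
have edge : ~` `[0%R, 1%R[%classic `&` `[0%R, 1%R]%classic = [set 1 : R].
  apply/seteqP; split => x /=; last by move=> ->; rewrite !in_itv /= ler01 lexx ltxx.
  rewrite !in_itv /= => -[x01 /andP[x0 x1]]; apply/eqP; rewrite eq_le x1 /=.
  by rewrite leNgt; apply/negP => lt_x1; apply: x01; rewrite x0.
apply/eqP; rewrite eq_le measure_ge0 andbT.
apply: le_trans (@prob_cylinder_cover_le {ffun 'I_t.+1 -> 'I_n} predT
  (fun f s => f (inord s)) t.+1 C _ mE mC _) _.
  move=> w Ew; exists [ffun s : 'I_t.+1 => K s w] => // s st.
  by rewrite ffunE inordK //; split => //; rewrite /C; case: eqP => [->|].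
rewrite big1 // => f _; rewrite (bigD1 ord_max) //= /C eqxx edge.
by rewrite lebesgue_measure_set1 mule0 mul0e.
Qed.

(* A draw [U t = 1] would select the supremum of the best-response set, possibly 1. *)
Definition draws_lt1 := \bigcap_t (U t @^-1` `[0%R, 1%R[%classic).

Lemma draws_lt1_measurable : measurable draws_lt1.
Proof. by apply: bigcapT_measurable => t; apply: measurable_U_preimage; exact: measurable_itv. Qed.

Lemma draws_lt1_ae : Pr.-negligible (~` draws_lt1).
Proof.
rewrite /draws_lt1 setC_bigcap; apply: negligible_bigcup => t.
rewrite preimage_setC; apply/negligibleP; last exact: draw_outside_unit_null.
by apply: measurable_U_preimage; apply: measurableC; exact: measurable_itv.
Qed.

Section Sweeps.
Variables (a0 : 'I_n) (sw : seq 'I_n).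

Definition sweep_block b := [set w | forall i, (i < n)%N -> K (b * n + i) w = nth a0 sw i].

Lemma sweep_block_measurable b : measurable (sweep_block b).
Proof.
rewrite (_ : sweep_block b =
    \bigcap_(i in [set i | (i < n)%N]) (K (b * n + i) @^-1` [set nth a0 sw i])).
  by apply: bigcap_measurableType => i _; exact: hKm.
by apply/seteqP; split => w /= wS i /wS.
Qed.

Let sweep_choice : {ffun 'I_n -> 'I_n} := [ffun i : 'I_n => nth a0 sw i].

(* [g b i] is the agent chosen at time [b * n + i]. *)
Let block_choice B (g : {ffun 'I_B -> {ffun 'I_n -> 'I_n}}) t : 'I_n :=
  if insub (t %/ n)%N is Some b then g b (insubd a0 (t %% n)%N) else a0.

Lemma no_sweep_prob_le B :
  (Pr (\bigcap_(b in [set b | (b < B)%N]) ~` sweep_block b)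
    <= ((1 - n%:R^-1 ^+ n) ^+ B)%:E)%E.
Proof.
pose x : R := n%:R^-1 ^+ n.
have mE : measurable (\bigcap_(b in [set b | (b < B)%N]) ~` sweep_block b).
  by apply: bigcap_measurableType => b _; apply: measurableC; exact: sweep_block_measurable.
apply: le_trans (@prob_cylinder_cover_le _ (mem (ffun_on (predC1 sweep_choice)))
  (@block_choice B) (B * n) (fun=> setT) _ mE (fun=> measurableT) _) _.
  move=> w notS; pose g := [ffun b : 'I_B => [ffun i : 'I_n => K (b * n + i) w]].
  exists g.
    apply/ffun_onP => b; rewrite !inE; apply/eqP => gb; apply: (notS b (ltn_ord b)) => i iln.
    by have := congr1 (fun f : {ffun 'I_n -> 'I_n} => f (Ordinal iln)) gb; rewrite !ffunE.
  move=> t tB; split => //; have tb : (t %/ n < B)%N by rewrite ltn_divLR.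
  rewrite /block_choice; case: (insubP 'I_B (t %/ n)%N) => [b _ bE|]; last by rewrite tb.
  by rewrite !ffunE val_insubd ltn_pmod // bE -divn_eq.
under eq_bigr => g _ do under eq_bigr => t _ do rewrite setTI lebesgue_unit_itv mule1.
under eq_bigr => g _ do rewrite prodEFin prodr_const card_ord mulnC exprM -/x.
rewrite sumEFin lee_fin sumr_const card_ffun_on cardC1 card_ffun !card_ord.
have N0 : (0 < n ^ n)%N by rewrite expn_gt0 hn.
rewrite -(mulr_natr (x ^+ B)) natrX -exprMn (_ : x * _ = 1 - x) //.
rewrite -subn1 natrB // natrX mulrBr mulr1 mulrC /x -exprMn mulfV ?expr1n //.
by rewrite pnatr_eq0 -lt0n.
Qed.

Lemma sweep_ae : Pr.-negligible (~` \bigcup_b sweep_block b).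
Proof.
pose x : R := n%:R^-1 ^+ n.
have x0 : 0 < x by rewrite exprn_gt0 // invr_gt0 ltr0n.
have x1 : x <= 1 by rewrite exprn_ile1 ?invr_ge0 ?ler0n // invf_le1 ?ltr0n // ler1n.
have mS B : measurable (\bigcap_(b in [set b | (b < B)%N]) ~` sweep_block b).
  by apply: bigcap_measurableType => b _; apply: measurableC; exact: sweep_block_measurable.
have sub : ~` (\bigcup_b sweep_block b) `<=`
    \bigcap_B \bigcap_(b in [set b | (b < B)%N]) ~` sweep_block b.
  by move=> w notS B _ b _ Sb; apply: notS; exists b.
apply: negligibleS sub _.
apply/negligibleP; first by apply: bigcapT_measurable => B; exact: mS.
apply: (@le_geometric_eq0 _ _ (1 - x)); first exact: measure_ge0.
  by apply/andP; split; lra.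
move=> B; apply: le_trans (no_sweep_prob_le B).
by apply: le_measure; rewrite ?inE //; [exact: bigcapT_measurable | move=> w /(_ B I)].
Qed.

End Sweeps.

End ChoiceProcess.

Lemma first_event_time d (T : measurableType d) (A : nat -> set T) :
  (forall m, measurable (A m)) ->
  exists tau : T -> option nat,
    [/\ forall m, measurable (tau @^-1` [set Some m]),
        forall w, (exists m, tau w = Some m) <-> (exists m, A m w)
      & forall w m, tau w = Some m -> A m w].
Proof.
move=> mA.
pose tau w := if pselect (exists m, `[< A m w >]) is left h then Some (ex_minn h) else None.
have tauP w m : tau w = Some m <-> A m w /\ forall m', (m' < m)%N -> ~ A m' w.
  rewrite /tau; case: pselect => [h|nA]; last first.
    by split=> [//|[Am _]]; case: nA; exists m; exact/asboolP.
  case: ex_minnP => m0 /asboolP Am0 m0min; split=> [[<-]|[Am mmin]].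
    by split=> // m' m'm Am'; have := m0min m' (asboolT Am'); rewrite leqNgt m'm.
  congr Some; apply/eqP; rewrite eqn_leq m0min ?asboolT //=.
  by rewrite leqNgt; apply/negP => /mmin.
exists tau; split.
- move=> m; rewrite (_ : _ @^-1` _ = A m `&` \bigcap_(m' in [set m' | (m' < m)%N]) ~` A m').
    by apply: measurableI => //; apply: bigcap_measurableType => m' _; exact: measurableC.
  by apply/seteqP; split=> w /tauP.
- move=> w; split=> [[m /tauP[Am _]]|[m Am]]; first by exists m.
  by rewrite /tau; case: pselect => [h|[]]; [exists (ex_minn h) | exists m; apply/asboolP].
- by move=> w m /tauP[].
Qed.

Lemma probability_negligibleC d (T : measurableType d) (R : realType)
    (Pr : probability T R) (A : set T) :
  measurable A -> Pr.-negligible (~` A) -> Pr A = 1%E.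
Proof.
move=> mA /(negligibleP _ (measurableC mA)) nA.
by have := probability_setC Pr (measurableC mA); rewrite setCK nA sube0.
Qed.

Theorem lemma3 (R : realType) (n : nat) (hn : (0 < n)%N)
  (P : 'M[R]_n) (sigma2 : 'I_n -> R)
  (hP : row_stochastic P) (hirr : irreducible_mx P) (haper : aperiodic_mx P)
  (hsig : forall j, 0 < sigma2 j)
  (d : measure_display) (Omega : measurableType d) (Pr : probability Omega R)
  (Z0 : Omega -> 'I_n -> R) (K : nat -> Omega -> 'I_n) (U : nat -> Omega -> R)
  (hZ0m : forall i, measurable_fun setT (fun w => Z0 w i))
  (hZ0 : forall w i, 0 <= Z0 w i <= 1)
  (hKm : forall t k, measurable (K t @^-1` [set k]))
  (hUm : forall t, measurable_fun setT (U t))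
  (hlaw : forall (N : nat) (A : 'I_n -> set R) (k : nat -> 'I_n) (C : nat -> set R),
     (forall i, measurable (A i)) -> (forall t, measurable (C t)) ->
     Pr ([set w | forall i, A i (Z0 w i)] `&`
         [set w | forall t, (t < N)%N -> K t w = k t /\ C t (U t w)])
     = (Pr [set w | forall i, A i (Z0 w i)] *
        \big[*%E/1%E]_(t < N)
          ((n%:R^-1)%:E * lebesgue_measure (C t `&` `[0%R, 1%R]%classic)))%E) :
  exists T : Omega -> option nat,
    (forall m, measurable (T @^-1` [set Some m])) /\
    Pr [set w | exists m, T w = Some m] = 1%E /\
    (forall w m t i, T w = Some m -> (m <= t)%N ->
       br_chain P sigma2 (Z0 w) (fun s => K s w) (fun s => U s w) t i < 1).
Proof.
have cylinder_law N k C : (forall t, measurable (C t)) ->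
    Pr (choice_cylinder K U N k C) = (\big[*%E/1%E]_(t < N)
      ((n%:R^-1)%:E * lebesgue_measure (C t `&` `[0%R, 1%R]%classic)))%E.
  move=> mC; have := hlaw N (fun=> setT) k C (fun=> measurableT) mC.
  rewrite (_ : [set w | forall i, setT (Z0 w i)] = setT); last by apply/seteqP; split.
  by rewrite setTI probability_setT mul1e.
pose sweep := sweep_block K (Ordinal hn) (variance_order sigma2).
pose swept m := draws_lt1 U `&` [set w | exists2 b, m = (b.+1 * n)%N & sweep b w].
have msweep b : measurable (sweep b) by exact: sweep_block_measurable.
have mswept m : measurable (swept m).
  apply: measurableI; first exact: draws_lt1_measurable.
  rewrite (_ : [set w | _] = \bigcup_(b in [set b | m = (b.+1 * n)%N]) sweep b).
    exact: bigcup_measurable.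
  by apply/seteqP; split=> w /= [b mb Sb]; exists b.
have [T [mT Tex Tswept]] := first_event_time mswept.
exists T; split=> //; split.
  rewrite (_ : [set w | _] = draws_lt1 U `&` \bigcup_b sweep b).
    apply: probability_negligibleC.
      by apply: measurableI; [exact: draws_lt1_measurable | exact: bigcupT_measurable].
    rewrite setCI; apply: negligibleU; first exact: draws_lt1_ae.
    exact: sweep_ae.
  apply/seteqP; split=> w /=; first by move=> /Tex[m [lt1 [b _ Sb]]]; split=> //; exists b.
  by move=> [lt1 [b _ Sb]]; apply/Tex; exists (b.+1 * n)%N; split=> //; exists b.
move=> w m t i /Tswept[lt1 [b -> Sb]] bt.
have hu s : 0 <= U s w < 1 by have := lt1 s I; rewrite /= in_itv.
apply: (br_chain_lt1_forever hP hirr hsig (hZ0 w) hu _ bt).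
by rewrite mulSn addnC; exact: (br_chain_sweep hP hirr hsig (hZ0 w) hu Sb).
Qed.
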